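(* Let $d$ be a positive integer, let $\mathcal{T}_{d+1}$ be the $(d+1)$-regular tree with a fixed origin $0$, and let $\delta_0$ be the function on $\mathcal{T}_{d+1}$ equal to $1$ at $0$ and $0$ elsewhere. Let $n$ be a positive even integer. Then for $x\in\mathcal{T}_{d+1}$, writing $|x|$ for the distance from $x$ to $0$, $$P_n(T_d/2)\delta_0(x)=\begin{cases}0 & |x| \text{ odd or } |x|>n,\\[2pt] \dfrac{1-d}{2d^{n/2}} & |x|<n \text{ and } |x| \text{ even},\\[4pt] \dfrac{1}{2d^{n/2}} & |x|=n.\end{cases}$$ In particular, $|P_n(T_d/2)\delta_0(x)|\lesssim d^{-n/2}$ for all $x$ (with implied constant depending only on $d$).
   Context: $T_d$ is the operator on functions on $\mathcal{T}_{d+1}$ given by $T_d f(x)=\frac{1}{\sqrt d}\sum_{y:\operatorname{dist}(x,y)=1}f(y)$. $P_n$ is the Chebyshev polynomial of the first kind of degree $n$, defined by $P_n(\cos\theta)=\cos n\theta$, and $P_n(T_d/2)$ is the corresponding polynomial in the operator $T_d/2$. *)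

From HB Require Import structures.
From mathcomp Require Import all_boot all_order all_algebra.
Set Implicit Arguments. Unset Strict Implicit. Unset Printing Implicit Defensive.
Import Order.TTheory GRing.Theory Num.Theory.
Local Open Scope ring_scope.

(* A vertex is a reduced word: [::] is the root; a vertex at distance k >= 1
   is a sequence [:: a_1; ...; a_k] with a_1 < d+1 and a_i < d for i >= 2
   (a_i indexes the child chosen at step i). *)
Definition tree_vertex (d : nat) (s : seq nat) : bool :=
  match s with
  | [::] => true
  | a :: t => (a < d.+1)%N && all (fun b => (b < d)%N) t
  end.

Definition parent (s : seq nat) : seq nat := take (size s).-1 s.

Definition nbrs (d : nat) (x : seq nat) : seq (seq nat) :=
  (if x is [::] then [::] else [:: parent x]) ++
  [seq rcons x i | i <- iota 0 (if x is [::] then d.+1 else d)].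

(* Functions on the tree are represented as functions on seq nat
   (only values at tree vertices matter). *)
Definition Td {R : rcfType} (d : nat) (f : seq nat -> R) : seq nat -> R :=
  fun x => (Num.sqrt (d%:R))^-1 * \sum_(y <- nbrs d x) f y.

Definition delta0 {R : rcfType} : seq nat -> R :=
  fun x => if x == [::] then 1 else 0.

(* Chebyshev polynomials of the first kind: P_0 = 1, P_1 = X,
   P_{n+2} = 2 X P_{n+1} - P_n  (equivalently P_n(cos t) = cos (n t)). *)
Fixpoint cheb_pair {R : nzRingType} (n : nat) : {poly R} * {poly R} :=
  match n with
  | 0 => (1, 'X)
  | m.+1 => let p := cheb_pair m in (p.2, 2%:R *: 'X * p.2 - p.1)
  end.
Definition cheb {R : nzRingType} (n : nat) : {poly R} := (cheb_pair n).1.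

Definition poly_op {R : rcfType} (p : {poly R})
  (A : (seq nat -> R) -> (seq nat -> R)) (f : seq nat -> R) : seq nat -> R :=
  fun x => \sum_(i < size p) p`_i * iter i A f x.

Definition cheb_Td_delta {R : rcfType} (d n : nat) : seq nat -> R :=
  poly_op (cheb n) (fun f x => Td d f x / 2%:R) delta0.

From HB Require Import structures.
From mathcomp Require Import all_boot all_order all_algebra.
From mathcomp Require Import ring lra zify.
Import Order.TTheory GRing.Theory Num.Theory.
Local Open Scope ring_scope.

(* T_d maps a function of |x| to a function of |x|, so every P_m(T_d/2) delta_0
   is radial and the Chebyshev recursion P_(m+2) = 2 X P_(m+1) - P_m becomes a
   three-term recursion on radial profiles.  The closed form
   c_m(k) / (2 d^(m/2)), with c_m(k) = 1 - d strictly inside the ball of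
   radius m, 1 on its sphere and 0 off the parity class of m, is then checked
   against that recursion by induction on m. *)

Lemma tree_vertex_rcons d x i :
  tree_vertex d x -> x != [::] -> (i < d)%N -> tree_vertex d (rcons x i).
Proof. by case: x => //= a t /andP[ha ht] _ hi; rewrite ha all_rcons hi ht. Qed.

Lemma tree_vertex_parent d x : tree_vertex d x -> tree_vertex d (parent x).
Proof.
case/lastP: x => // p z; rewrite /parent size_rcons /= -cats1 take_size_cat //.
by case: p => //= a t; rewrite all_cat /= => /andP[-> /andP[-> _]].
Qed.

Lemma poly_op_widen (R : rcfType) (p : {poly R}) A f x N :
  (size p <= N)%N -> poly_op p A f x = \sum_(i < N) p`_i * iter i A f x.
Proof.
move=> hN; rewrite /poly_op (big_ord_widen _ (fun i => p`_i * iter i A f x) hN).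
rewrite [RHS](bigID (fun i : 'I_N => (i < size p)%N)) /=.
rewrite [X in _ = _ + X]big1 ?addr0 // => i; rewrite -leqNgt => hi.
by rewrite nth_default // mul0r.
Qed.

Section TreeOperator.
Variables (R : rcfType) (d : nat).
Implicit Types (f g : seq nat -> R) (x : seq nat).

Lemma eq_Td f g x : f =1 g -> Td d f x = Td d g x.
Proof. by move=> fg; rewrite /Td; congr (_ * _); apply: eq_bigr => y _. Qed.

Lemma Td_sum N (c : nat -> R) (h : nat -> seq nat -> R) x :
  Td d (fun y => \sum_(i < N) c i * h i y) x = \sum_(i < N) c i * Td d (h i) x.
Proof.
rewrite /Td exchange_big mulr_sumr; apply: eq_bigr => i _.
by rewrite !mulr_sumr; apply: eq_bigr => y _; rewrite mulrCA.
Qed.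

Lemma Td_radial f (g : nat -> R) x :
  tree_vertex d x -> (forall y, tree_vertex d y -> f y = g (size y)) ->
  Td d f x = (Num.sqrt (d%:R : R))^-1 *
    (if x is [::] then d.+1%:R * g 1%N
     else g (size x).-1 + d%:R * g (size x).+1).
Proof.
move=> hx hf; rewrite /Td /nbrs; congr (_ * _).
case: x hx => [|a t] hx.
  rewrite cat0s big_map (eq_big_seq (fun=> g 1%N)); last first.
    by move=> i; rewrite mem_iota add0n => /andP[_ hi]; rewrite hf //= andbT.
  by rewrite big_const_seq count_predT size_iota iter_addr_0 mulr_natl.
rewrite big_cat big_seq1 big_map hf; last exact: tree_vertex_parent.
rewrite (eq_big_seq (fun=> g (size t).+2)); last first.
  move=> i; rewrite mem_iota add0n => /andP[_ hi].
  by rewrite hf ?size_rcons //; apply: tree_vertex_rcons.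
rewrite /= big_const_seq count_predT size_iota iter_addr_0 mulr_natl.
by rewrite /parent size_take /= ltnSn.
Qed.

Lemma cheb_Td_delta0 x : cheb_Td_delta (R := R) d 0 x = delta0 x.
Proof.
rewrite /cheb_Td_delta (@poly_op_widen _ _ _ _ _ 1%N); last first.
  by rewrite size_polyC oner_neq0.
by rewrite big_ord1 /= coefC /= mul1r.
Qed.

Lemma cheb_Td_delta1 x : cheb_Td_delta (R := R) d 1 x = Td d delta0 x / 2%:R.
Proof.
rewrite /cheb_Td_delta (@poly_op_widen _ _ _ _ _ 2%N); last by rewrite size_polyX.
by rewrite !big_ord_recr big_ord0 /= !coefX /= mul0r !add0r mul1r.
Qed.

Lemma cheb_Td_deltaSS n x :
  cheb_Td_delta (R := R) d n.+2 x =
  Td d (cheb_Td_delta d n.+1) x - cheb_Td_delta d n x.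
Proof.
set N := maxn (size (cheb (R := R) n.+1)) (size (cheb (R := R) n)).
have size1 : (size (cheb (R := R) n.+1) <= N)%N by rewrite leq_maxl.
have size0 : (size (cheb (R := R) n) <= N)%N by rewrite leq_maxr.
have size2 : (size (cheb (R := R) n.+2) <= N.+1)%N.
  apply: leq_trans (size_polyD _ _) _.
  rewrite size_polyN geq_max (leq_trans size0) // andbT.
  apply: leq_trans (size_polyMleq _ _) _.
  have := size_scale_leq (2%:R : R) ('X : {poly R}); rewrite size_polyX => hs.
  rewrite -subn1 leq_subLR; apply: leq_trans (leq_add hs size1) _; lia.
rewrite /cheb_Td_delta (poly_op_widen _ _ _ _ _ _ size2).
rewrite (poly_op_widen _ _ _ _ x _ (leqW size0)).
rewrite (eq_Td _ _ _ (fun y => poly_op_widen _ _ _ _ y _ size1)) Td_sum /=.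
under eq_bigr => i _ do rewrite coefB -scalerAl coefZ coefXM mulrBl.
rewrite sumrB; congr (_ - _).
rewrite big_ord_recl eqxx mulr0 mul0r add0r; apply: eq_bigr => i _.
by rewrite lift0 /=; field.
Qed.

End TreeOperator.

Section RadialProfile.
Variables (R : rcfType) (d : nat).

(* The entry at m = 0 is doubled because P_0 = 1, so that delta_0 itself is
   [cheb_profile 0 k / 2]. *)
Definition cheb_profile (m k : nat) : R :=
  if m is 0 then (k == 0)%:R *+ 2
  else if odd (m + k) || (m < k)%N then 0
  else if (k < m)%N then 1 - d%:R else 1.

Arguments cheb_profile : simpl never.

Definition cheb_radial (m k : nat) : R :=
  cheb_profile m k / (2%:R * Num.sqrt (d%:R : R) ^+ m).

Lemma cheb_profile_pos m k : (0 < m)%N ->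
  cheb_profile m k =
    if odd (m + k) || (m < k)%N then 0 else if (k < m)%N then 1 - d%:R else 1.
Proof. by case: m. Qed.

Lemma cheb_profile_rec_root m :
  d.+1%:R * cheb_profile m.+1 1 - d%:R * cheb_profile m 0 = cheb_profile m.+2 0.
Proof.
case: m => [|m]; rewrite /cheb_profile /=; first by rewrite -natr1; ring.
rewrite !addn0 !addn1 /= !negbK !ltnS ltn0 !orbF.
by case: (odd m) => /=; rewrite ?ltnS -?natr1; ring.
Qed.

Lemma cheb_profile_rec m k :
  cheb_profile m.+1 k + d%:R * cheb_profile m.+1 k.+2
    - d%:R * cheb_profile m k.+1 = cheb_profile m.+2 k.+1.
Proof.
case: m => [|m].
  by case: k => [|[|k]]; rewrite /cheb_profile /= ?ltnS ?leq0n ?orbT mul0rn; ring.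
rewrite /cheb_profile !addSn !addnS /= !negbK.
case: (odd (m + k)) => /=; first by rewrite !mulr0 subr0 addr0.
rewrite !ltnS; repeat (case: ifP => ?); try (exfalso; lia); ring.
Qed.

Lemma scaled_recurrence (s D a b c : R) p : s != 0 -> s ^+ 2 = D ->
  s^-1 * (a / (2%:R * s ^+ p.+1) + D * (b / (2%:R * s ^+ p.+1)))
    - c / (2%:R * s ^+ p) = (a + D * b - D * c) / (2%:R * s ^+ p.+2).
Proof.
move=> s0 <-; have sp : s ^+ p != 0 by rewrite expf_neq0.
by rewrite !exprS; field; rewrite sp s0.
Qed.

Hypothesis d_gt0 : (0 < d)%N.

Lemma cheb_profile_norm m k : `|cheb_profile m k| <= d%:R + 1.
Proof.
have d1 : (1 : R) <= d%:R by rewrite ler1n.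
rewrite /cheb_profile; case: m => [|m].
  by case: (k == 0); rewrite normrMn normr_nat mulr2n /=; lra.
by repeat case: ifP => _; rewrite ?normr0 ?normr1 ?ler_norml; try lra;
  apply/andP; split; lra.
Qed.

Lemma sqrtr_nat_neq0 : Num.sqrt (d%:R : R) != 0.
Proof. by rewrite gt_eqF // sqrtr_gt0 ltr0n. Qed.

Lemma cheb_Td_delta0_radial x :
  cheb_Td_delta (R := R) d 0 x = cheb_radial 0 (size x).
Proof.
rewrite cheb_Td_delta0 /delta0 /cheb_radial /cheb_profile size_eq0.
by case: (x == [::]); rewrite /= ?mul0rn ?mul0r // mulr1 divff ?pnatr_eq0.
Qed.

Lemma cheb_Td_delta1_radial x : tree_vertex d x ->
  cheb_Td_delta (R := R) d 1 x = cheb_radial 1 (size x).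
Proof.
move=> hx; rewrite cheb_Td_delta1 -(eq_Td _ _ _ _ _ (cheb_Td_delta0 R d)).
rewrite (Td_radial _ _ _ _ _ hx (fun y _ => cheb_Td_delta0_radial y)).
have := sqrtr_nat_neq0; rewrite /cheb_radial /cheb_profile.
case: x hx => [|a [|b t]] _ /= s0;
  by rewrite ?ltnS ?leq0n ?orbT ?mul0rn ?mulr0 ?mul0r ?addr0 //; field.
Qed.

Lemma Td_cheb_radial m (f : seq nat -> R) x : tree_vertex d x ->
  (forall y, tree_vertex d y -> f y = cheb_radial m.+1 (size y)) ->
  Td d f x - cheb_radial m (size x) = cheb_radial m.+2 (size x).
Proof.
move=> hx hf; rewrite (Td_radial _ _ _ _ _ hx hf) /cheb_radial.
have s0 := sqrtr_nat_neq0.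
have s2 : Num.sqrt (d%:R : R) ^+ 2 = d%:R by rewrite sqr_sqrtr // ler0n.
case: x hx => [|a t] _ /=; last by rewrite scaled_recurrence // cheb_profile_rec.
rewrite -[d.+1%:R]nat1r mulrDl mul1r scaled_recurrence //.
by rewrite -cheb_profile_rec_root -[d.+1%:R]nat1r; congr (_ / _); ring.
Qed.

Lemma cheb_Td_delta_radial m x : tree_vertex d x ->
  cheb_Td_delta (R := R) d m x = cheb_radial m (size x).
Proof.
suff: forall y, tree_vertex d y ->
    cheb_Td_delta (R := R) d m y = cheb_radial m (size y) /\
    cheb_Td_delta (R := R) d m.+1 y = cheb_radial m.+1 (size y).
  by move=> h /h[].
elim: m => [|m IH] y hy.
  by split; [exact: cheb_Td_delta0_radial | exact: cheb_Td_delta1_radial].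
split; first by case: (IH y hy).
rewrite cheb_Td_deltaSS (IH y hy).1 (Td_cheb_radial _ _ _ hy) // => z hz.
by case: (IH z hz).
Qed.

End RadialProfile.

Lemma sqrtr_expr_even (R : rcfType) (a : R) n : 0 <= a -> ~~ odd n ->
  Num.sqrt a ^+ n = a ^+ n./2.
Proof.
move=> a0 hn; rewrite -{1}(odd_double_half n) (negbTE hn) add0n -muln2 mulnC.
by rewrite exprM sqr_sqrtr.
Qed.

Theorem lemma1 (R : rcfType) (d : nat) (hd : (0 < d)%N) :
  (forall (n : nat), (0 < n)%N -> ~~ odd n ->
   forall x : seq nat, tree_vertex d x ->
     cheb_Td_delta (R := R) d n x =
       if odd (size x) || (n < size x)%N then 0
       else if (size x < n)%N then (1 - d%:R) / (2%:R * d%:R ^+ (n./2))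
       else 1 / (2%:R * d%:R ^+ (n./2)))
  /\
  (exists C : R, forall (n : nat), (0 < n)%N -> ~~ odd n ->
     forall x : seq nat, tree_vertex d x ->
       `|cheb_Td_delta (R := R) d n x| <= C / d%:R ^+ (n./2)).
Proof.
have value n x : (0 < n)%N -> ~~ odd n -> tree_vertex d x ->
    cheb_Td_delta (R := R) d n x
    = cheb_profile R d n (size x) / (2%:R * d%:R ^+ n./2).
  by move=> n0 hn hx; rewrite cheb_Td_delta_radial // /cheb_radial
    sqrtr_expr_even ?ler0n.
split=> [n n0 hn x hx|].
  rewrite value // cheb_profile_pos // oddD (negbTE hn).
  by case: ifP => _; [rewrite mul0r | case: ifP].
exists ((d%:R + 1) / 2%:R) => n n0 hn x hx; rewrite value //.
have dn : (0 : R) < 2%:R * d%:R ^+ n./2 by rewrite mulr_gt0 // exprn_gt0 ?ltr0n.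
rewrite normrM normfV (gtr0_norm dn) -mulrA -invfM.
by apply: ler_wpM2r; [rewrite invr_ge0 ltW | exact: cheb_profile_norm].
Qed.
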